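(* Let $n\ge 7$ and let $T_n^1(3,3)$ be the graph obtained from two vertex-disjoint triangles $v_1v_2v_3$ and $w_1w_2w_3$ joined by the edge $v_3w_1$, by attaching $n-6$ pendant edges (new leaves) to $v_3$. Then \[ \operatorname{avm}(T_n^1(3,3))=3-\frac{6}{3n-11}. \]
   Context: $\operatorname{avm}(G)$ is the average of $|M|$ over all maximal matchings $M$ of $G$ (a matching is maximal if not properly contained in another matching). *)

From mathcomp Require Import all_boot all_order all_algebra.
Set Implicit Arguments. Unset Strict Implicit. Unset Printing Implicit Defensive.
Import GRing.Theory Num.Theory.

(* A simple graph on a finType T is given by a symmetric irreflexive rel e.
   Its edges are the 2-element vertex sets {x,y} with e x y. *)
Definition edges (T : finType) (e : rel T) : {set {set T}} :=
  [set [set x; y] | x in T, y in T & e x y].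

Definition is_matching (T : finType) (e : rel T) (M : {set {set T}}) : bool :=
  (M \subset edges e) &&
  [forall A in M, forall B in M, (A != B) ==> [disjoint A & B]].

Definition is_maximal_matching (T : finType) (e : rel T) (M : {set {set T}}) : bool :=
  is_matching e M &&
  [forall N : {set {set T}}, (M \proper N) ==> ~~ is_matching e N].

Definition avm (T : finType) (e : rel T) : rat :=
  ((\sum_(M : {set {set T}} | is_maximal_matching e M) #|M|)%:R /
   #|[set M : {set {set T}} | is_maximal_matching e M]|%:R)%R.

(* T_n^1(3,3) on vertices 0..n-1:
   v1 = 0, v2 = 1, v3 = 2, w1 = 3, w2 = 4, w3 = 5, leaves 6..n-1 attached to v3. *)
Definition T1_33_base (a b : nat) : bool :=
  [|| (a == 0) && (b == 1), (a == 0) && (b == 2), (a == 1) && (b == 2),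
      (a == 3) && (b == 4), (a == 3) && (b == 5), (a == 4) && (b == 5),
      (a == 2) && (b == 3) | (a == 2) && (6 <= b)].

Definition T1_33 (n : nat) : rel 'I_n :=
  fun x y => T1_33_base x y || T1_33_base y x.
Arguments T1_33 n : clear implicits.

(* Every maximal matching contains an edge at v3, since the pendant edge at a
   leaf must be dominated, and an edge of the triangle w1w2w3, since w2w3 can
   only be dominated by a triangle edge.  If v3 is matched into v1v2, these two
   edges already form a maximal matching; otherwise v1v2 is forced as well, and
   if v3 is matched to w1 the triangle edge must be w2w3.  This gives 2 * 3
   maximal matchings of size 2 and 1 + 3 (n - 6) of size 3, that is 3n - 11
   matchings of total size 9n - 39. *)

From mathcomp Require Import all_boot all_order all_algebra zify ring.
Import GRing.Theory Num.Theory.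
Set Implicit Arguments. Unset Strict Implicit.

Section Matchings.
Variables (T : finType) (e : rel T).

Lemma matchingP (M : {set {set T}}) :
  reflect ({subset M <= edges e} /\
           {in M &, forall A B : {set T}, A != B -> [disjoint A & B]})
    (is_matching e M).
Proof.
apply: (iffP andP) => [[/subsetP sub /forall_inP dis]|[sub dis]].
  by split=> // A B AM BM; move/forall_inP: (dis A AM) => /(_ B BM) /implyP.
split; first exact/subsetP.
by apply/forall_inP => A AM; apply/forall_inP => B BM; apply/implyP; apply: dis.
Qed.

Lemma maximal_matchingP (M : {set {set T}}) :
  is_maximal_matching e M <->
  is_matching e M /\
  {in edges e, forall f : {set T}, exists2 A, A \in M & ~~ [disjoint A & f]}.
Proof.
split=> [/andP[mM /forallP maxM]|[mM meetM]].
  split=> // f fE; apply/exists_inP; apply: contraT => /exists_inPn freef.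
  have [sub dis] := matchingP _ mM.
  have fM : f \notin M.
    apply: contraL fE => /freef /negPn; rewrite -setI_eq0 setIid => /eqP ->.
    by apply/imset2P => -[x y _ _ /esym/setP/(_ x)]; rewrite !inE eqxx.
  have /implyP/(_ (properUr _))/negP[] := maxM (f |: M); first by rewrite sub1set.
  apply/matchingP; split=> [A /setU1P[->|/sub] //|A B].
  move=> /setU1P[->|AM] /setU1P[->|BM]; rewrite ?eqxx // => AB.
  - by rewrite disjoint_sym; apply/negPn/freef.
  - by apply/negPn/freef.
  - exact: dis AB.
apply/andP; split=> //; apply/forallP => N; apply/implyP => /properP[/subsetP MN [f fN fM]].
apply/negP => /matchingP[sub dis].
have [A AM /negP[]] := meetM f (sub f fN).
by apply: dis (MN A AM) fN _; apply: contraNneq fM => <-.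
Qed.

Lemma maximal_matching_sub_eq (M S : {set {set T}}) :
  is_matching e M -> is_maximal_matching e S -> S \subset M -> M = S.
Proof.
move=> mM /andP[_ /forallP maxS] SM; apply/eqP; apply: contraT => neq.
by move/implyP: (maxS M); rewrite properEneq eq_sym neq SM mM => /(_ isT).
Qed.

Lemma avm_parametrization (I : finType) (phi : I -> {set {set T}}) :
  injective phi ->
  (forall M, is_maximal_matching e M <-> exists i, M = phi i) ->
  avm e = ((\sum_i #|phi i|)%:R / #|I|%:R)%R.
Proof.
move=> phi_inj phiP.
have maxE : [set M | is_maximal_matching e M] = phi @: [set: I].
  apply/setP => M; rewrite inE; apply/idP/imsetP => [/phiP[i ->]|[i _ ->]].
    by exists i.
  by apply/phiP; exists i.
rewrite /avm maxE (eq_bigl (fun M => M \in phi @: [set: I])); last first.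
  by move=> M; rewrite -maxE inE.
rewrite big_imset /=; last by move=> i j _ _ /phi_inj.
by rewrite card_imset // cardsT; under eq_bigl do rewrite in_setT.
Qed.

End Matchings.

Definition nat_graph (k : nat) (adj : rel nat) : rel 'I_k.+1 := fun x y => adj x y.
Arguments nat_graph : clear implicits.

Definition same_edge (p q : nat * nat) : bool :=
  (p.1 == q.1) && (p.2 == q.2) || (p.1 == q.2) && (p.2 == q.1).

Definition pair_disjoint (p q : nat * nat) : bool :=
  [&& p.1 != q.1, p.1 != q.2, p.2 != q.1 & p.2 != q.2].

Section NatGraph.
Variables (k : nat) (adj : rel nat).
Local Notation G := (nat_graph k adj).

(* [vtx a] is the vertex [a] only for [a <= k] (it is 0 otherwise), whence the
   bounds in the lemmas below. *)
Definition vtx (a : nat) : 'I_k.+1 := inord a.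
Definition vedge (a b : nat) : {set 'I_k.+1} := [set vtx a; vtx b].

Definition coded (s : seq (nat * nat)) : {set {set 'I_k.+1}} :=
  [set A in [seq vedge p.1 p.2 | p <- s]].

Definition bounded (s : seq (nat * nat)) : bool :=
  all (fun p => (p.1 <= k) && (p.2 <= k)) s.

Lemma vtxK a : a <= k -> vtx a = a :> nat.
Proof. exact: inordK. Qed.

Lemma vedgeC a b : vedge a b = vedge b a.
Proof. exact: setUC. Qed.

Lemma mem_vedge x a b : a <= k -> b <= k ->
  (x \in vedge a b) = (x == a :> nat) || (x == b :> nat).
Proof. by move=> ak bk; rewrite !inE -!val_eqE /= !vtxK. Qed.

Lemma vtx_vedge a b : a <= k -> b <= k -> (vtx a \in vedge a b) && (vtx b \in vedge a b).
Proof. by move=> ak bk; rewrite !mem_vedge // !vtxK // !eqxx orbT. Qed.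

Lemma disjoint_vedge a b c d : a <= k -> b <= k -> c <= k -> d <= k ->
  [disjoint vedge a b & vedge c d] = pair_disjoint (a, b) (c, d).
Proof.
move=> ak bk ck dk; apply/idP/idP => [dis|abcd].
  have /andP[aE bE] := vtx_vedge ak bk.
  move: (disjointFr dis aE) (disjointFr dis bE).
  rewrite !mem_vedge // !vtxK // => /negbT/norP[ac ad] /negbT/norP[bc bd].
  by rewrite /pair_disjoint /= ac ad bc bd.
rewrite -setI_eq0; apply/eqP/setP => x; rewrite !inE -!val_eqE /= !vtxK //.
by apply/negbTE; move: abcd; rewrite /pair_disjoint /=; lia.
Qed.

Lemma eq_vedge a b c d : a <= k -> b <= k -> c <= k -> d <= k ->
  (vedge a b == vedge c d) = same_edge (a, b) (c, d).
Proof.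
move=> ak bk ck dk; apply/eqP/idP => [abcd|]; last first.
  by rewrite /same_edge /= => /orP[] /andP[/eqP-> /eqP->]; rewrite // vedgeC.
have /andP[aE bE] := vtx_vedge ak bk; have /andP[cE dE] := vtx_vedge ck dk.
rewrite abcd in aE bE; rewrite -abcd in cE dE.
move: aE bE cE dE; rewrite !mem_vedge // !vtxK // /same_edge /=; lia.
Qed.

Lemma vedgesP A :
  reflect (exists a b, [/\ a <= k, b <= k, adj a b & A = vedge a b]) (A \in edges G).
Proof.
apply: (iffP imset2P) => [[x y _ xy ->]|[a [b [ak bk ab ->]]]].
  by rewrite inE in xy; exists x, y; rewrite !leq_ord /vedge /vtx !inord_val.
by exists (vtx a) (vtx b); rewrite // inE /nat_graph !vtxK.
Qed.

Lemma vedge_in_coded a b s : a <= k -> b <= k -> bounded s ->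
  (vedge a b \in coded s) = has (same_edge (a, b)) s.
Proof.
move=> ak bk /allP sk; rewrite inE; apply/mapP/hasP => [[p ps /eqP]|[p ps abp]].
  by have /andP[p1k p2k] := sk p ps; rewrite eq_vedge //; exists p.
by exists p => //; have /andP[p1k p2k] := sk p ps; apply/eqP; rewrite eq_vedge.
Qed.

Lemma coded_sub s (M : {set {set 'I_k.+1}}) :
  (coded s \subset M) = all (fun p => vedge p.1 p.2 \in M) s.
Proof.
apply/subsetP/allP => [sM p ps|sM A]; first by apply: sM; rewrite inE; apply/mapP; exists p.
by rewrite inE => /mapP[p ps ->]; apply: sM.
Qed.

Lemma pairwise_disjoint_in s : pairwise pair_disjoint s ->
  {in s &, forall p q, p != q -> pair_disjoint p q}.
Proof.
pose r p q := (p == q) || pair_disjoint p q.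
have r_refl : reflexive r by move=> p; rewrite /r eqxx.
have r_sym : symmetric r.
  move=> p q; rewrite /r eq_sym; congr (_ || _).
  by apply/idP/idP; rewrite /pair_disjoint; lia.
move=> sdis; have /allrelP rs : all2rel r s.
  by rewrite -pairwise_all2rel //; apply: sub_pairwise sdis => p q pq; rewrite /r pq orbT.
by move=> p q ps qs pq; have := rs p q ps qs; rewrite /r (negbTE pq).
Qed.

Lemma coded_maximal s : bounded s -> all (fun p => adj p.1 p.2) s ->
  pairwise pair_disjoint s ->
  (forall c d, c <= k -> d <= k -> adj c d -> has (fun p => ~~ pair_disjoint p (c, d)) s) ->
  is_maximal_matching G (coded s).
Proof.
move=> /allP sk /allP sadj /pairwise_disjoint_in sdis sdom.
apply/maximal_matchingP; split.
  apply/matchingP; split=> [A|A B]; rewrite !inE.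
    case/mapP=> p ps ->; have /andP[p1k p2k] := sk p ps.
    by apply/vedgesP; exists p.1, p.2; split=> //; apply: sadj.
  move=> /mapP[p ps ->] /mapP[q qs ->] pq.
  have /andP[p1k p2k] := sk p ps; have /andP[q1k q2k] := sk q qs.
  by rewrite disjoint_vedge // -!surjective_pairing; apply: sdis => //; apply: contraNneq pq => ->.
move=> f /vedgesP[c [d [ck dk cd ->]]].
have /hasP[p ps pcd] := sdom c d ck dk cd; have /andP[p1k p2k] := sk p ps.
exists (vedge p.1 p.2); first by rewrite inE; apply/mapP; exists p.
by rewrite disjoint_vedge // -surjective_pairing.
Qed.

Lemma card_coded s : bounded s -> pairwise pair_disjoint s -> #|coded s| = size s.
Proof.
move=> /allP sk sdis; rewrite cardsE -(size_map (fun p => vedge p.1 p.2)).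
apply/card_uniqP.
rewrite map_inj_in_uniq.
  by apply: pairwise_uniq sdis => -[a b]; rewrite /pair_disjoint /= eqxx.
move=> p q ps qs /eqP; have /andP[? ?] := sk p ps; have /andP[? ?] := sk q qs.
rewrite eq_vedge // => pq; apply: contraTeq pq => /(pairwise_disjoint_in sdis ps qs).
by rewrite /same_edge /pair_disjoint /=; lia.
Qed.

Lemma matching_vedges M a b c d : is_matching G M ->
  a <= k -> b <= k -> c <= k -> d <= k -> vedge a b \in M -> vedge c d \in M ->
  same_edge (a, b) (c, d) || pair_disjoint (a, b) (c, d).
Proof.
move=> /matchingP[_ dis] ak bk ck dk abM cdM.
have [/eqP|neq] := eqVneq (vedge a b) (vedge c d); first by rewrite eq_vedge // => ->.
by rewrite -disjoint_vedge ?dis ?orbT.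
Qed.

Lemma maximal_matching_meets M c d : is_maximal_matching G M ->
  c <= k -> d <= k -> adj c d ->
  exists a b, [/\ a <= k, b <= k, adj a b, vedge a b \in M & ~~ pair_disjoint (a, b) (c, d)].
Proof.
move=> /maximal_matchingP[/matchingP[sub _] meet] ck dk cd.
have [|A AM] := meet (vedge c d); first by apply/vedgesP; exists c, d.
have /vedgesP[a [b [ak bk ab eA]]] := sub A AM; rewrite eA in AM *.
by rewrite disjoint_vedge // => abcd; exists a, b.
Qed.

End NatGraph.

Definition t33_adj (a b : nat) : bool := T1_33_base a b || T1_33_base b a.

Lemma T1_33E k : T1_33 k.+1 = nat_graph k t33_adj.
Proof. by []. Qed.

Lemma t33_adjC : symmetric t33_adj.
Proof. by move=> a b; rewrite /t33_adj orbC. Qed.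

Lemma t33_adjP c d : t33_adj c d ->
  [|| (c == 2) || (d == 2), [&& c <= 1, d <= 1 & c != d]
    | [&& 3 <= c <= 5, 3 <= d <= 5 & c != d]].
Proof.
by rewrite /t33_adj /T1_33_base => /orP[] h; repeat case/orP: h => h; lia.
Qed.

Lemma t33_adj2 b : t33_adj 2 b = [|| b == 0, b == 1, b == 3 | 6 <= b].
Proof. by apply/idP/idP; rewrite /t33_adj /T1_33_base; lia. Qed.

(* [right_edge t] is the edge of the triangle w1w2w3 = 345 avoiding 3 + t, and
   [code b t] lists the maximal matching that matches v3 to [b] and uses
   [right_edge t]; it contains v1v2 = 01 unless [b] is v1 or v2. *)
Definition right_edge (t : 'I_3) : nat * nat := nth (4, 5) [:: (4, 5); (3, 5); (3, 4)] t.

Definition code (b : nat) (t : 'I_3) : seq (nat * nat) :=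
  [:: (2, b), right_edge t & if b < 2 then [::] else [:: (0, 1)]].

Section TwoTriangles.
Variables (k : nat) (k6 : 6 <= k).
Local Notation G := (nat_graph k t33_adj).

Definition valid_code (b : nat) (t : 'I_3) : bool :=
  [&& t33_adj 2 b, b <= k & (b == 3) ==> (t == 0 :> nat)].

Ltac t33_lia := rewrite /t33_adj /T1_33_base /pair_disjoint /same_edge /=; lia.

Lemma code_bounded b t : b <= k -> bounded k (code b t).
Proof. by case: t => -[|[|[|//]]] ? bk; rewrite /code; case: ifP; rewrite /= bk; lia. Qed.

Lemma code_pairwise b t : valid_code b t -> pairwise pair_disjoint (code b t).
Proof.
case/and3P; rewrite t33_adj2 => b2 bk; case: t => -[|[|[|//]]] t3 /= /implyP b3;
  rewrite /code; case: ifPn => b_2; move: b2 b3 b_2; t33_lia.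
Qed.

Lemma code_maximal b t : valid_code b t -> is_maximal_matching G (coded k (code b t)).
Proof.
move=> vbt; have /and3P[b2 bk _] := vbt; rewrite t33_adj2 in b2.
apply: coded_maximal; [exact: code_bounded | | exact: code_pairwise |].
  by case: t {vbt} => -[|[|[|//]]] ? /=; rewrite /code; case: ifPn; move: b2; t33_lia.
move=> c d ck dk /t33_adjP /or3P[] cd; case: t vbt => -[|[|[|//]]] ? /and3P[_ _ /= /implyP b3];
  rewrite /code; case: ifPn => b_2; move: cd b2 b3 b_2; t33_lia.
Qed.

Lemma right_edge_inj : injective right_edge.
Proof. by move=> [[|[|[|//]]] ?] [[|[|[|//]]] ?] //= _; apply: val_inj. Qed.

Lemma code_inj b t b' t' : b <= k -> b' <= k ->
  coded k (code b t) = coded k (code b' t') -> b = b' /\ t = t'.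
Proof.
move=> bk bk' eq_code.
have mem p : p \in code b t -> has (same_edge p) (code b' t').
  move=> pc; have /allP/(_ p pc)/andP[p1 p2] := code_bounded t bk.
  rewrite {1}[p]surjective_pairing -(vedge_in_coded (k := k)) ?code_bounded // -eq_code inE.
  by apply/mapP; exists p.
have rt_in : right_edge t \in code b t by rewrite inE mem_head orbT.
suff /andP[/eqP-> /eqP/right_edge_inj->] : (b == b') && (right_edge t == right_edge t') by [].
move: (mem _ (mem_head _ _)) (mem _ rt_in).
rewrite /code /right_edge; case: t {eq_code mem rt_in} => -[|[|[|//]]] ?;
  by case: t' => -[|[|[|//]]] ? /=; case: ifPn; rewrite ?xpair_eqE; t33_lia.
Qed.

Let le_k a : a <= 6 -> a <= k. Proof. by move=> a6; apply: leq_trans k6. Qed.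

Section MaximalMatching.
Variables (M : {set {set 'I_k.+1}}) (maxM : is_maximal_matching G M).
Let matM : is_matching G M. Proof. by case/andP: maxM. Qed.

Lemma mate_matched : exists b, [/\ b <= k, t33_adj 2 b & vedge k 2 b \in M].
Proof.
have [a [b [ak bk ab abM meet]]] := maximal_matching_meets maxM (@le_k 2 isT) k6 isT.
case/or3P: (t33_adjP ab) => [/orP[]/eqP eq2|ab1|ab3]; last 2 first.
- by move: meet ab1; t33_lia.
- by move: meet ab3; t33_lia.
- by exists b; rewrite -eq2.
- by exists a; rewrite t33_adjC vedgeC -eq2.
Qed.

Lemma right_matched : exists t, vedge k (right_edge t).1 (right_edge t).2 \in M.
Proof.
have [a [b [ak bk ab abM meet]]] := maximal_matching_meets maxM (@le_k 4 isT) (@le_k 5 isT) isT.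
case/or3P: (t33_adjP ab) => [/orP[]/eqP eq2|ab1|ab3].
- by move: ab meet; rewrite eq2 t33_adj2; t33_lia.
- by move: ab meet; rewrite eq2 t33_adjC t33_adj2; t33_lia.
- by move: meet ab1; t33_lia.
(* A triangle edge is determined by the sum of its ends. *)
have : [|| a + b == 9, a + b == 8 | a + b == 7] by move: ab3; lia.
case/or3P=> ab_sum; [exists (@Ordinal 3 0 isT)|exists (@Ordinal 3 1 isT)|exists (@Ordinal 3 2 isT)];
  apply: etrans abM; congr (_ \in M); apply/eqP;
  rewrite eq_vedge ?le_k //; move: ab3 ab_sum; rewrite /right_edge; t33_lia.
Qed.

Lemma left_matched b : 3 <= b <= k -> vedge k 2 b \in M -> vedge k 0 1 \in M.
Proof.
move=> /andP[b3 bk] bM.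
have [c [d [ck dk cd cdM meet]]] := maximal_matching_meets maxM (@le_k 0 isT) (@le_k 1 isT) isT.
suff /eqP<- : vedge k c d == vedge k 0 1 by [].
have := matching_vedges matM (@le_k 2 isT) bk ck dk bM cdM.
by rewrite eq_vedge ?le_k //; move: meet b3; case/or3P: (t33_adjP cd); t33_lia.
Qed.

Lemma right_edge_forced t : vedge k 2 3 \in M ->
  vedge k (right_edge t).1 (right_edge t).2 \in M -> t = 0 :> nat.
Proof.
case: t => -[|[|[|//]]] //= t3 M23 tM;
  by have := matching_vedges matM (le_k _) (le_k _) (le_k _) (le_k _) M23 tM; t33_lia.
Qed.

Lemma maximal_matching_code : exists b t, valid_code b t /\ M = coded k (code b t).
Proof.
have [b [bk b2 bM]] := mate_matched; have [t tM] := right_matched.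
have vbt : valid_code b t.
  rewrite /valid_code b2 bk; apply/implyP => /eqP b3; rewrite b3 in bM.
  by rewrite (right_edge_forced bM tM).
exists b, t; split=> //; apply: maximal_matching_sub_eq matM (code_maximal vbt) _.
rewrite coded_sub /code /= bM tM /=.
case: ifPn => //= b_2; rewrite andbT (left_matched _ bM) //.
by move: b2 b_2; rewrite t33_adj2 /=; lia.
Qed.

End MaximalMatching.

(* v3 is matched into v1v2, to w1 (then the triangle edge is w2w3), or to one of
   the k - 5 leaves. *)
Local Notation idx := ('I_2 * 'I_3 + (unit + 'I_(k - 5) * 'I_3))%type.

Definition mate (i : idx) : nat :=
  match i with inl (j, _) => j | inr (inl _) => 3 | inr (inr (l, _)) => l + 6 end.

Definition free_vertex (i : idx) : 'I_3 :=
  match i with inl (_, t) | inr (inr (_, t)) => t | inr (inl _) => ord0 end.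

Definition matching_of (i : idx) : {set {set 'I_k.+1}} :=
  coded k (code (mate i) (free_vertex i)).

Lemma valid_idx i : valid_code (mate i) (free_vertex i).
Proof.
rewrite /valid_code t33_adj2.
by case: i => [[j t]|[[]|[l t]]] /=; [have := ltn_ord j| |have := ltn_ord l]; lia.
Qed.

Lemma idx_of_valid b t : valid_code b t -> exists i, mate i = b /\ free_vertex i = t.
Proof.
case/and3P; rewrite t33_adj2 => b2 bk /implyP b3.
have [b_lt2|b_ge2] := ltnP b 2; first by exists (inl (Ordinal b_lt2, t)).
have [b_eq3|b_ne3] := eqVneq b 3.
  move: b3; rewrite b_eq3 => /(_ isT) /eqP t0.
  by exists (inr (inl tt)); split=> //; apply: val_inj; rewrite /= t0.
have lk : b - 6 < k - 5 by lia.
by exists (inr (inr (Ordinal lk, t))); split=> //=; lia.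
Qed.

Lemma idx_inj i j : mate i = mate j -> free_vertex i = free_vertex j -> i = j.
Proof.
case: i j => [[j t]|[[]|[l t]]] [[j' t']|[[]|[l' t']]] //= eq_mate eq_fv.
all: try by [rewrite eq_fv (val_inj eq_mate)|rewrite eq_fv (val_inj (addIn eq_mate))].
all: by move: eq_mate; (try have := ltn_ord j); (try have := ltn_ord j'); lia.
Qed.

Lemma matching_of_inj : injective matching_of.
Proof.
move=> i j; have /and3P[_ ik _] := valid_idx i; have /and3P[_ jk _] := valid_idx j.
by case/(code_inj ik jk); apply: idx_inj.
Qed.

Lemma maximal_matchingE M : is_maximal_matching G M <-> exists i, M = matching_of i.
Proof.
split=> [/maximal_matching_code[b [t [vbt ->]]]|[i ->]]; last exact: code_maximal (valid_idx i).
by have [i [<- <-]] := idx_of_valid vbt; exists i.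
Qed.

Lemma card_matching_of i : #|matching_of i| = if mate i < 2 then 2 else 3.
Proof.
have vi := valid_idx i; have /and3P[_ ik _] := vi.
by rewrite card_coded ?code_bounded ?code_pairwise // /code; case: ifP.
Qed.

Lemma card_idx : #|{: idx}| = 3 * k - 8.
Proof. by rewrite card_sum card_sum card_unit !card_prod !card_ord; lia. Qed.

Lemma sum_card_matching_of : \sum_(i : idx) #|matching_of i| = 9 * k - 30.
Proof.
rewrite (eq_bigr (fun i => if i is inl _ then 2 else 3)); last first.
  by case=> [[j t]|[[]|[l t]]] _; rewrite card_matching_of /= ?ltn_ord //; case: ifP; lia.
rewrite !big_sumType !sum_nat_const card_unit !card_prod !card_ord /=; lia.
Qed.

Local Open Scope ring_scope.

Lemma avm_two_triangles : avm G = 3 - 6 / (3 * k%:R - 8).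
Proof.
rewrite (avm_parametrization matching_of_inj maximal_matchingE).
rewrite sum_card_matching_of card_idx.
have card_idxE : (3 * k - 8)%N%:R = 3 * k%:R - 8 :> rat by rewrite natrB ?natrM //; lia.
have sumE : (9 * k - 30)%N%:R = 9 * k%:R - 30 :> rat by rewrite natrB ?natrM //; lia.
have card_idx_neq0 : 3 * k%:R - 8 != 0 :> rat by rewrite -card_idxE pnatr_eq0; lia.
by rewrite card_idxE sumE; field.
Qed.

End TwoTriangles.

Local Open Scope ring_scope.

Theorem lemma4p1 (n : nat) (hn : (7 <= n)%N) :
  avm (T1_33 n) = 3 - 6 / (3 * n%:R - 11).
Proof.
have [k -> k6] : exists2 k, n = k.+1 & (6 <= k)%N by exists n.-1; lia.
rewrite T1_33E avm_two_triangles //; congr (3 - 6 / _).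
by rewrite -addn1 natrD; ring.
Qed.
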